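(* Let $R$ be a ring and let $A$ be a left localization of $R$, i.e. $A=S'^{-1}R$ for some $S'\in\mathrm{Den}_l(R,\mathfrak a)$, $\mathfrak a\in\mathrm{Ass}_l(R)$. Then $A$ is a maximal left quotient ring of $R$ if and only if $Q_l(A)=A$ and $\mathrm{Ass}_l(A)=\{0\}$, i.e. $A$ is a left localization maximal ring.
   Context: Rings are associative with $1$. A multiplicatively closed subset $S$ ($1\in S$, $0\notin S$) is a left Ore set if $Sr\cap Rs\ne\emptyset$ for all $r\in R,s\in S$; $\mathrm{ass}(S):=\{r\mid sr=0\text{ for some }s\in S\}$; it is a left denominator set if moreover $rs=0$ ($s\in S$) implies $tr=0$ for some $t\in S$. $\mathrm{Den}_l(R)$ is the set of left denominator sets, $\mathrm{Ass}_l(R)=\{\mathrm{ass}(S)\mid S\in\mathrm{Den}_l(R)\}$, $\mathrm{Den}_l(R,\mathfrak a)=\{S\mid\mathrm{ass}(S)=\mathfrak a\}$. The left localizations $S^{-1}R$, $S\in\mathrm{Den}_l(R)$, form a poset in which $S_1^{-1}R\to S_2^{-1}R$ whenever $S_1\subseteq S_2$ (via the natural map $s^{-1}r\mapsto s^{-1}r$); its maximal elements, the maximal left quotient rings of $R$, are exactly the rings $S^{-1}R$ with $S$ a maximal element of $(\mathrm{Den}_l(R),\subseteq)$. For a ring $B$, $Q_l(B):=S_0(B)^{-1}B$ where $S_0(B)$ is the largest element of $\mathrm{Den}_l(B,0)$. A ring $B$ is a left localization maximal ring if $Q_l(B)=B$ and $\mathrm{Ass}_l(B)=\{0\}$. 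*)

From HB Require Import structures.
From mathcomp Require Import all_boot all_algebra.
Set Implicit Arguments. Unset Strict Implicit. Unset Printing Implicit Defensive.
Import GRing.Theory.
Local Open Scope ring_scope.

Definition mult_closed (R : nzRingType) (S : R -> Prop) : Prop :=
  [/\ S 1, ~ S 0 & forall a b, S a -> S b -> S (a * b)].

Definition left_Ore (R : nzRingType) (S : R -> Prop) : Prop :=
  forall r s, S s -> exists s' r', S s' /\ s' * r = r' * s.

Definition ass (R : nzRingType) (S : R -> Prop) (r : R) : Prop :=
  exists s, S s /\ s * r = 0.

Definition Den_l (R : nzRingType) (S : R -> Prop) : Prop :=
  [/\ mult_closed S, left_Ore S &
      forall r s, S s -> r * s = 0 -> exists t, S t /\ t * r = 0].

Definition Den_l_at (R : nzRingType) (a : R -> Prop) (S : R -> Prop) : Prop :=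
  Den_l S /\ forall r, ass S r <-> a r.

Definition Ass_l (R : nzRingType) (a : R -> Prop) : Prop :=
  exists S, Den_l_at a S.

Definition inverse_of (A : nzRingType) (x u : A) : Prop := u * x = 1 /\ x * u = 1.

(* f : R -> A (a ring homomorphism) presents A as the left localization
   S^{-1}R (left ring of fractions in the sense of Stenstrom):
   (i) f(s) is a unit for all s in S,
   (ii) every a in A has the form f(s)^{-1} f(r) with s in S,
   (iii) ker f = ass(S). *)
Definition is_left_localization (R A : nzRingType) (f : R -> A) (S : R -> Prop) : Prop :=
  [/\ forall s, S s -> exists u, inverse_of (f s) u,
      forall a : A, exists s r u, [/\ S s, inverse_of (f s) u & a = u * f r]
    & forall r, f r = 0 <-> ass S r].

Definition max_Den_l (R : nzRingType) (S : R -> Prop) : Prop :=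
  Den_l S /\ forall T, Den_l T -> (forall x, S x -> T x) -> forall x, T x -> S x.

Definition is_S0 (R : nzRingType) (S : R -> Prop) : Prop :=
  Den_l_at (fun r => r = 0) S /\
  forall T, Den_l_at (fun r => r = 0) T -> forall x, T x -> S x.

(* Q_l(B) = B : B is (via the identity map) its own localization at S_0(B) *)
Definition Ql_eq_self (B : nzRingType) : Prop :=
  exists S0, is_S0 S0 /\ is_left_localization (@id B) S0.

Definition Ass_l_trivial (B : nzRingType) : Prop :=
  forall a : B -> Prop, Ass_l a <-> (forall r, a r <-> r = 0).

Definition left_localization_maximal (B : nzRingType) : Prop :=
  Ql_eq_self B /\ Ass_l_trivial B.

Definition max_left_quotient_ring (R A : nzRingType) (f : R -> A) : Prop :=
  exists S, max_Den_l S /\ is_left_localization f S.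

From HB Require Import structures.
From mathcomp Require Import all_boot all_algebra.
Set Implicit Arguments. Unset Strict Implicit. Unset Printing Implicit Defensive.
Import GRing.Theory.
Local Open Scope ring_scope.

(* A ring B is left localization maximal exactly when every left denominator
   set of B consists of units.  If S is maximal and T is a left denominator set
   of A = S^{-1}R, the elements a of A having a left multiple in T and such that
   y a is T-torsion only when y is form a left denominator set containing T and
   all units; its preimage in R is a left denominator set containing S, hence
   equal to S, which forces T to consist of units.  Conversely, if every left
   denominator set of A consists of units, the preimage S of the units of A is a
   left denominator set with A = S^{-1}R, and any larger T maps onto a left
   denominator set of A, so T lies inside S. *)

Section DenominatorSets.
Variable R : nzRingType.
Implicit Types (S T : R -> Prop) (r s t : R).

Lemma Den_l1 S : Den_l S -> S 1.
Proof. by case=> [[]]. Qed.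

Lemma Den_l_neq0 S : Den_l S -> ~ S 0.
Proof. by case=> [[]]. Qed.

Lemma Den_lM S s t : Den_l S -> S s -> S t -> S (s * t).
Proof. by case=> [[_ _ SM]] _ _; exact: SM. Qed.

Lemma Den_l_Ore S r s : Den_l S -> S s -> exists s' r', S s' /\ s' * r = r' * s.
Proof. by case=> _ Ore _; exact: Ore. Qed.

Lemma Den_l_ann S r s : Den_l S -> S s -> r * s = 0 -> exists t, S t /\ t * r = 0.
Proof. by case=> _ _ ann; exact: ann. Qed.

Lemma ass_sub S T r : (forall x, S x -> T x) -> ass S r -> ass T r.
Proof. by move=> ST [s [Ss sr0]]; exists s; split; [exact: ST|]. Qed.

Lemma ass0 S : Den_l S -> ass S 0.
Proof. by move=> DS; exists 1; rewrite mulr0; split; [exact: Den_l1|]. Qed.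

Definition is_unit (x : R) := exists u, inverse_of x u.

Lemma is_unit1 : is_unit 1.
Proof. by exists 1; split; rewrite mulr1. Qed.

Lemma is_unit0 : ~ is_unit 0.
Proof. by move=> [u [/eqP]]; rewrite mulr0 eq_sym oner_eq0. Qed.

Lemma is_unitM x y : is_unit x -> is_unit y -> is_unit (x * y).
Proof.
move=> [u [ux xu]] [v [vy yv]]; exists (v * u); split.
  by rewrite mulrA -(mulrA v) ux mulr1 vy.
by rewrite mulrA -(mulrA x) yv mulr1 xu.
Qed.

Lemma is_unit_cancel_l x y : is_unit y -> is_unit (y * x) -> is_unit x.
Proof.
move=> [v [vy yv]] Uyx; rewrite -(mul1r x) -vy -mulrA.
by apply: is_unitM Uyx; exists y.
Qed.

Lemma Den_l_units : Den_l is_unit.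
Proof.
split.
- by split; [exact: is_unit1 | exact: is_unit0 | exact: is_unitM].
- move=> r s [v [vs sv]]; exists 1, (r * v); split; first exact: is_unit1.
  by rewrite mul1r -mulrA vs mulr1.
- move=> r s [v [vs sv]] rs0; exists 1; split; first exact: is_unit1.
  by rewrite mul1r -(mulr1 r) -sv mulrA rs0 mul0r.
Qed.

Lemma ass_units r : ass is_unit r <-> r = 0.
Proof.
split; last by move->; exact: (ass0 Den_l_units).
by move=> [s [[v [vs _]] sr0]]; rewrite -(mul1r r) -vs -mulrA sr0 mulr0.
Qed.

Definition only_unit_denominators :=
  forall T, Den_l T -> forall x, T x -> is_unit x.

Lemma Ql_eq_self_units : only_unit_denominators -> Ql_eq_self R.
Proof.
move=> unitsR; exists is_unit; split; first split.
- by split; [exact: Den_l_units | exact: ass_units].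
- by move=> T [DT _]; exact: unitsR.
- split=> [// | a | r]; last exact: iff_sym (ass_units r).
  by exists 1, a, 1; split; [exact: is_unit1 | split; rewrite mulr1 | rewrite mul1r].
Qed.

Lemma Ass_l_trivial_units : only_unit_denominators -> Ass_l_trivial R.
Proof.
move=> unitsR a; split.
- move=> [S [DS assS]] r; split.
    by move/assS/(ass_sub (unitsR S DS))/ass_units.
  by move->; apply/assS; exact: ass0.
- move=> a0; exists is_unit; split=> [|r]; first exact: Den_l_units.
  exact: iff_trans (ass_units r) (iff_sym (a0 r)).
Qed.

Lemma left_localization_maximalP :
  left_localization_maximal R <-> only_unit_denominators.
Proof.
split=> [|unitsR]; last by split; [exact: Ql_eq_self_units | exact: Ass_l_trivial_units].
move=> [[S0 [[_ S0max] [unitS0 _ _]]] assR] T DT x Tx.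
have assR0 : forall r, ass T r <-> r = 0 by apply: (assR (ass T)).1; exists T.
exact/unitS0/(S0max T).
Qed.

End DenominatorSets.

Section Localization.
Variables (R A : nzRingType) (f : {rmorphism R -> A}) (S : R -> Prop).
Hypotheses (DS : Den_l S) (LS : is_left_localization f S).

Lemma loc_unit s : S s -> is_unit (f s).
Proof. by case: LS => unitS _ _; exact: unitS. Qed.

Lemma loc_num a : exists s r, S s /\ f s * a = f r.
Proof.
case: LS => _ frac _; have [s [r [u [Ss [_ su] ->]]]] := frac a.
by exists s, r; rewrite mulrA su mul1r.
Qed.

Lemma loc_num2 a b : exists s r r', [/\ S s, f s * a = f r & f s * b = f r'].
Proof.
have [s1 [r1 [Ss1 e1]]] := loc_num b.
have [s2 [r2 [Ss2 e2]]] := loc_num a.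
have [s3 [r3 [Ss3 e3]]] := Den_l_Ore s1 DS Ss2.
exists (s3 * s1), (r3 * r2), (s3 * r1); split; first exact: Den_lM.
  by rewrite e3 !rmorphM -mulrA e2.
by rewrite !rmorphM -mulrA e1.
Qed.

Lemma loc_ker r : f r = 0 -> exists s, S s /\ s * r = 0.
Proof. by case: LS => _ _ ker /ker. Qed.

Lemma loc_eq r r' : f r = f r' -> exists s, S s /\ s * r = s * r'.
Proof.
move=> e; have [s [Ss sr0]] : exists s, S s /\ s * (r - r') = 0.
  by apply: loc_ker; rewrite rmorphB e subrr.
by exists s; split=> //; apply/eqP; rewrite -subr_eq0 -mulrBr sr0.
Qed.

Lemma Den_l_preim (P : A -> Prop) :
  Den_l P -> (forall s, S s -> P (f s)) -> Den_l (fun r => P (f r)).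
Proof.
move=> DP SP.
have Pnum q s z : P q -> S s -> f s * q = f z -> forall s', S s' -> P (f (s' * z)).
  move=> Pq Ss e s' Ss'; rewrite rmorphM -e mulrA -rmorphM.
  by apply: Den_lM DP _ Pq; exact/SP/(Den_lM DS).
split.
- split; first by rewrite rmorph1; exact: Den_l1.
    by rewrite rmorph0; exact: Den_l_neq0.
  by move=> r r' Pr Pr'; rewrite rmorphM; exact: Den_lM.
- move=> r x Px; have [q [b [Pq e]]] := Den_l_Ore (f r) DP Px.
  have [s [z [y [Ss ez ey]]]] := loc_num2 q b.
  have [s' [Ss' e']] : exists s', S s' /\ s' * (z * r) = s' * (y * x).
    by apply: loc_eq; rewrite !rmorphM -ez -ey -!mulrA e.
  exists (s' * z), (s' * y); split; first exact: Pnum Pq Ss ez s' Ss'.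
  by rewrite -!mulrA.
- move=> r x Px /(congr1 f); rewrite rmorphM rmorph0 => rx0.
  have [q [Pq qr0]] := Den_l_ann DP Px rx0.
  have [s [z [Ss ez]]] := loc_num q.
  have [s' [Ss' e']] : exists s', S s' /\ s' * (z * r) = 0.
    by apply: loc_ker; rewrite rmorphM -ez -mulrA qr0 mulr0.
  by exists (s' * z); split; [exact: Pnum Pq Ss ez s' Ss' | rewrite -mulrA].
Qed.

Lemma Den_l_image (T : R -> Prop) : Den_l T -> (forall s, S s -> T s) ->
  Den_l (fun a => exists t, T t /\ f t = a).
Proof.
move=> DT ST; split.
- split; first by exists 1; split; [exact: Den_l1 | exact: rmorph1].
    move=> [t [Tt /loc_ker [s [Ss st0]]]]; apply: (Den_l_neq0 DT).
    by rewrite -st0; exact: Den_lM DT (ST _ Ss) Tt.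
  move=> _ _ [t [Tt <-]] [t' [Tt' <-]].
  by exists (t * t'); rewrite rmorphM; split; [exact: Den_lM DT Tt Tt'|].
- move=> a _ [t [Tt <-]]; have [s [y [Ss e]]] := loc_num a.
  have [t1 [r1 [Tt1 e1]]] := Den_l_Ore y DT Tt.
  exists (f (t1 * s)), (f r1); split.
    by exists (t1 * s); split=> //; exact: Den_lM DT Tt1 (ST _ Ss).
  by rewrite rmorphM -mulrA e -!rmorphM e1.
- move=> a _ [t [Tt <-]] at0; have [s [y [Ss e]]] := loc_num a.
  have [s2 [Ss2 e2]] : exists s2, S s2 /\ s2 * (y * t) = 0.
    by apply: loc_ker; rewrite rmorphM -e -mulrA at0 mulr0.
  have [t3 [Tt3 e3]] := Den_l_ann DT Tt (etrans (esym (mulrA _ _ _)) e2).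
  exists (f (t3 * s2 * s)); split.
    exists (t3 * s2 * s); split=> //.
    exact: Den_lM DT (Den_lM DT Tt3 (ST _ Ss2)) (ST _ Ss).
  by rewrite rmorphM -mulrA e -rmorphM -mulrA e3 rmorph0.
Qed.

Lemma is_left_localization_sup (T : R -> Prop) :
  (forall s, S s -> T s) -> (forall t, T t -> is_unit (f t)) -> is_left_localization f T.
Proof.
move=> ST unitT; split=> [// | a | r].
- case: LS => _ frac _; have [s [r [u [Ss us ->]]]] := frac a.
  by exists s, r, u; split=> //; exact: ST.
- split; first by move/loc_ker/(ass_sub ST).
  move=> [t [/unitT [v [vt _]] tr0]].
  by rewrite -(mul1r (f r)) -vt -mulrA -rmorphM tr0 rmorph0 mulr0.
Qed.

End Localization.

Section DenominatorClosure.
Variables (A : nzRingType) (T : A -> Prop).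
Hypothesis DT : Den_l T.

Definition Den_l_closure (a : A) :=
  (exists c, T (c * a)) /\ (forall y, ass T (y * a) -> ass T y).

Lemma Den_l_closureM a b :
  Den_l_closure a -> Den_l_closure b -> Den_l_closure (a * b).
Proof.
move=> [[c Tca] assa] [[d Tdb] assb]; split.
- have [t [r [Tt e]]] := Den_l_Ore d DT Tca.
  by exists (r * c); rewrite mulrA -(mulrA r) -e -mulrA; exact: Den_lM.
- by move=> y; rewrite mulrA => /assb /assa.
Qed.

Lemma Den_l_closure_sub t : T t -> Den_l_closure t.
Proof.
move=> Tt; split; first by exists 1; rewrite mul1r.
move=> y [t' [Tt' e]].
have [t'' [Tt'' e']] := Den_l_ann DT Tt (etrans (esym (mulrA _ _ _)) e).
by exists (t'' * t'); rewrite -mulrA; split; [exact: Den_lM|].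
Qed.

Lemma Den_l_closure_units u : is_unit u -> Den_l_closure u.
Proof.
move=> [v [vu uv]]; split; first by exists v; rewrite vu; exact: Den_l1.
move=> y [t [Tt e]]; exists t; split=> //.
by rewrite -(mulr1 y) -uv !mulrA -(mulrA t) e mul0r.
Qed.

Lemma Den_l_closure_Den_l : Den_l Den_l_closure.
Proof.
split.
- split; first exact/Den_l_closure_units/is_unit1.
    by move=> [[c]]; rewrite mulr0 => /(Den_l_neq0 DT).
  exact: Den_l_closureM.
- move=> r x [[c Tcx] _]; have [t [b [Tt e]]] := Den_l_Ore r DT Tcx.
  by exists t, (b * c); rewrite -mulrA; split; [exact: Den_l_closure_sub|].
- move=> r x [_ assx] rx0.
  have [t [Tt tr0]] : ass T r by apply: assx; rewrite rx0; exact: ass0.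
  by exists t; split; [exact: Den_l_closure_sub|].
Qed.

End DenominatorClosure.

Lemma max_Den_l_only_unit_denominators (R A : nzRingType)
    (f : {rmorphism R -> A}) (S : R -> Prop) :
  max_Den_l S -> is_left_localization f S -> only_unit_denominators A.
Proof.
move=> [DS Smax] LS T DT x Tx.
pose S1 r := Den_l_closure T (f r).
have unitS1 s : S s -> S1 s by move/(loc_unit LS)/(Den_l_closure_units DT).
have DS1 : Den_l S1 by apply: (Den_l_preim DS LS (Den_l_closure_Den_l DT)).
have [s [r [Ss e]]] := loc_num LS x.
have S1r : S1 r.
  rewrite /S1 /= -e; apply: (Den_l_closureM DT); first exact: unitS1.
  exact: Den_l_closure_sub.
apply: (is_unit_cancel_l (loc_unit LS Ss)); rewrite e.
exact/(loc_unit LS)/(Smax S1 DS1 unitS1).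
Qed.

Lemma only_unit_denominators_max (R A : nzRingType)
    (f : {rmorphism R -> A}) (S : R -> Prop) :
  Den_l S -> is_left_localization f S -> only_unit_denominators A ->
  max_Den_l (fun r => is_unit (f r)) /\
  is_left_localization f (fun r => is_unit (f r)).
Proof.
move=> DS LS unitsA; have SU s : S s -> is_unit (f s) by exact: loc_unit.
split; last exact: (is_left_localization_sup (T := fun r => is_unit (f r)) LS SU).
split; first exact: (Den_l_preim (P := @is_unit A) DS LS (Den_l_units A) SU).
move=> T DT SUT x Tx; apply: (unitsA _ (Den_l_image LS DT _)); last by exists x.
by move=> s /SU /SUT.
Qed.

Theorem theorem3p11 (R A : nzRingType) (a : R -> Prop) (S' : R -> Prop)
  (sigma : {rmorphism R -> A})
  (Ha : Ass_l a) (HS' : Den_l_at a S')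
  (Hloc : is_left_localization sigma S') :
  max_left_quotient_ring sigma <-> left_localization_maximal A.
Proof.
split.
- move=> [S [MS LS]]; apply/left_localization_maximalP.
  exact: max_Den_l_only_unit_denominators MS LS.
- move/left_localization_maximalP => unitsA; exists (fun r => is_unit (sigma r)).
  exact: only_unit_denominators_max HS'.1 Hloc unitsA.
Qed.
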